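(* Let $n\ge 2$, $\ell<n$. There are unique unital $\ast$-homomorphisms $\pi^{(+\ell)},\pi^{(-\ell)}:C^\ast(Q_n)\to C^\ast(Q_{n-1})$ with $\pi^{(+\ell)}(p_x)=\tilde p_y$ if $x=(y\#0)^{(+\ell)}$ for some vertex $y$ of $Q_{n-1}$ and $\pi^{(+\ell)}(p_x)=0$ otherwise, and $\pi^{(-\ell)}(p_x)=\tilde p_y$ if $x=y^{(-\ell)}$ for some vertex $y$ of $Q_{n-1}$ and $\pi^{(-\ell)}(p_x)=0$ otherwise. Moreover, for $\mathbf s=[s_0,\dots,s_{n-2}]\in\Delta_{n-2}$ and $\mathbf t := [s_0,\dots,s_{\ell-1},0,s_\ell,\dots,s_{n-2}]\in\Delta_{n-1}$, the representation $\rho_{\mathbf t}$ of $C^\ast(Q_n)$ is unitarily equivalent to $(\rho_{\mathbf s}\circ\pi^{(+\ell)})\oplus(\rho_{\mathbf s}\circ\pi^{(-\ell)})$.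
   Context: For $m\ge1$, identify integers $0\le i<2^m$ with their $m$-digit binary representations $i=\sum_k i_k2^k$; $\mathrm{par}_k(i)=\sum_{r=0}^k i_r\bmod 2$, and $i\#k$ is $i$ with its $k$-th digit flipped. The hypercube $Q_m$ has vertex classes $U_m=\{i<2^m\mid \mathrm{par}_{m-1}(i)=0\}$, $V_m=\{j<2^m\mid\mathrm{par}_{m-1}(j)=1\}$, with $i\in U_m$, $j\in V_m$ adjacent iff $j=i\#k$ for some $k<m$. $C^\ast(Q_m)$ is the universal unital C*-algebra generated by projections $p_x$ ($x\in U_m\cup V_m$) with $\sum_{u\in U_m}p_u=1=\sum_{v\in V_m}p_v$ and $p_up_v=0$ for non-adjacent $u,v$; the generators of $C^\ast(Q_{n-1})$ are written $\tilde p_y$. For $y=\sum_{k=0}^{n-2}y_k2^k<2^{n-1}$ and $\ell<n$, $y^{(+\ell)}$ (resp. $y^{(-\ell)}$) is the number $<2^n$ obtained by inserting a digit $1$ (resp. $0$) at position $\ell$ of the binary representation of $y$: $y^{(\pm\ell)} = \sum_{k<\ell}y_k2^k + \epsilon 2^\ell + \sum_{k=\ell}^{n-2}y_k2^{k+1}$ with $\epsilon=1$ resp. $0$. $\Delta_{m-1}=\{[t_0,\dots,t_{m-1}]\mid t_k\ge0,\sum t_k=1\}$. For $\mathbf t\in\Delta_{m-1}$, let $c_{\mathbf t}(ij)=(-1)^{\mathrm{par}_k(i)}\sqrt{t_k}$ for $i\in U_m$, $j=i\#k$, and $c_{\mathbf t}(ij)=0$ for non-adjacent $i,j$; $\rho_{\mathbf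 t}:C^\ast(Q_m)\to M_{U_m}$ is the representation with $\rho_{\mathbf t}(p_i)=E_{ii}$ ($i\in U_m$) and $\rho_{\mathbf t}(p_j)=[c_{\mathbf t}(i_1j)\overline{c_{\mathbf t}(i_2j)}]_{i_1,i_2\in U_m}$ ($j\in V_m$). *)

From HB Require Import structures.
From mathcomp Require Import all_boot all_order all_algebra.
From mathcomp Require Import complex.
Set Implicit Arguments. Unset Strict Implicit. Unset Printing Implicit Defensive.
Import Order.TTheory GRing.Theory Num.Theory.
Local Open Scope ring_scope.

Definition bit (i k : nat) : bool := odd (i %/ 2 ^ k).
Definition par (k i : nat) : bool := odd (\sum_(r < k.+1) bit i r).
Definition flip (i k : nat) : nat := if bit i k then (i - 2 ^ k)%N else (i + 2 ^ k)%N.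

(* y^{(+l)} (e = true) and y^{(-l)} (e = false): insert digit e at position l *)
Definition ins (l : nat) (e : bool) (y : nat) : nat :=
  (y %% 2 ^ l + e * 2 ^ l + (y %/ 2 ^ l) * 2 ^ l.+1)%N.

Definition adj (m u v : nat) : bool := [exists k : 'I_m, v == flip u k].

(* Defining relations of C^*(Q_m) for a family q of elements of a ring with
   involution (A, star): q x (x < 2^m) are projections, the U_m-sum and the
   V_m-sum equal 1, and p_u p_v = 0 for u in U_m, v in V_m non-adjacent. *)
Definition Qrel (m : nat) (A : nzRingType) (star : A -> A) (q : nat -> A) : Prop :=
  [/\ forall x, (x < 2 ^ m)%N -> q x * q x = q x /\ star (q x) = q x,
      \sum_(x < 2 ^ m | ~~ par m.-1 x) q x = 1,
      \sum_(x < 2 ^ m | par m.-1 x) q x = 1 &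
      forall u v, (u < 2 ^ m)%N -> (v < 2 ^ m)%N -> ~~ par m.-1 u -> par m.-1 v ->
        ~~ adj m u v -> q u * q v = 0].

(* the vertex y of Q_{n-1} with x = (y#0)^{(+l)}, resp. x = y^{(-l)}, if any *)
Definition preP (n l x : nat) : option nat :=
  omap val [pick y : 'I_(2 ^ n.-1) | x == ins l true (flip y 0)].
Definition preM (n l x : nat) : option nat :=
  omap val [pick y : 'I_(2 ^ n.-1) | x == ins l false y].

Definition img (A : nmodType) (q : nat -> A) (o : option nat) : A :=
  if o is Some y then q y else 0.

(* the standard simplex Delta_{m-1} (t indexed by k < m) *)
Definition simplex (R : numDomainType) (m : nat) (t : nat -> R) : Prop :=
  (forall k, (k < m)%N -> 0 <= t k) /\ \sum_(k < m) t k = 1.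

Definition tins (R : numDomainType) (l : nat) (s : nat -> R) : nat -> R :=
  fun k => if (k < l)%N then s k else if k == l then 0 else s k.-1.

Definition cc (R : rcfType) (m : nat) (t : nat -> R) (i j : nat) : R[i] :=
  if [pick k : 'I_m | j == flip i k] is Some k
  then (-1) ^+ par k i * real_complex R (Num.sqrt (t k)) else 0.

(* enumeration of U_m by 'I_(2^(m-1)) (the basis of C^{U_m}):
   a |-> the vertex with digits 1..m-1 those of a and digit 0 = parity of a *)
Definition uenum (m a : nat) : nat := (2 * a + par m.-1 a)%N.

(* rho_t : C^*(Q_m) -> M_{U_m}, on generators (matrices w.r.t. basis uenum) *)
Definition rho (R : rcfType) (m : nat) (t : nat -> R) (x : nat) : 'M[R[i]]_(2 ^ m.-1) :=
  \matrix_(a, b)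
    if ~~ par m.-1 x then ((uenum m a == x) && (uenum m b == x))%:R
    else cc m t (uenum m a) x * conjc (cc m t (uenum m b) x).

Definition adjmx (R : rcfType) p q (M : 'M[R[i]]_(p, q)) : 'M[R[i]]_(q, p) :=
  (map_mx (@conjc R) M)^T.

From mathcomp Require Import all_boot all_algebra complex zify ring.
Import GRing.Theory Num.Theory.

(* Both maps y |-> (y#0)^{(+l)} and y |-> y^{(-l)} are injective, send U_{n-1} into U_n and
   V_{n-1} into V_n (flipping digit 0 compensates the inserted 1), preserve adjacency and have
   images separated by digit l; this makes the prescribed images of the p_x satisfy the
   relations of C^*(Q_n).  For the representations, t_l = 0 kills every coefficient c_t(ij)
   along direction l, so c_t only links vertices with the same l-th digit, i.e. vertices of
   one of the two images; there c_t agrees with c_s up to a sign (-1)^(par of the digits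
   below l) at each end.  The unitary is the resulting signed permutation
   C^{U_n} -> C^{U_{n-1}} (+) C^{U_{n-1}}. *)

(** * Binary digits *)

Lemma bit0E i : bit i 0 = odd i.
Proof. by rewrite /bit expn0 divn1. Qed.

Lemma bitSE i k : bit i k.+1 = bit (i %/ 2) k.
Proof. by rewrite /bit expnS divnMA. Qed.

Lemma bit_div i l k : bit (i %/ 2 ^ l) k = bit i (k + l).
Proof. by rewrite /bit -divnMA -expnD addnC. Qed.

Lemma eq_bits a b : (forall k, bit a k = bit b k) -> a = b.
Proof.
move: {2}(a + b) (leqnn (a + b)) => N; elim: N a b => [|N IH] a b le_abN eq_ab; first lia.
rewrite (divn_eq a 2) (divn_eq b 2) !modn2 -!bit0E eq_ab; congr (_ * _ + _).
by apply: IH => [|k]; rewrite -?bitSE //; lia.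
Qed.

Lemma bit_small {a m k} : a < 2 ^ m -> m <= k -> bit a k = false.
Proof.
move=> lt_a le_mk; rewrite /bit divn_small //.
by apply: leq_trans lt_a _; rewrite leq_exp2l.
Qed.

Lemma lt_pow_bits a m : (forall k, m <= k -> bit a k = false) -> a < 2 ^ m.
Proof.
move=> high0; have a_hi0 : a %/ 2 ^ m = 0.
  by apply: eq_bits => k; rewrite bit_div high0 ?leq_addl // /bit div0n.
by rewrite (divn_eq a (2 ^ m)) a_hi0 ltn_mod expn_gt0.
Qed.

Lemma bit_splice r k q (c : bool) j : r < 2 ^ k ->
  bit (r + 2 ^ k * (2 * q + c)) j =
  if j < k then bit r j else if j == k then c else bit q (j - k.+1).
Proof.
move=> lt_r; case: ltnP => [lt_jk | le_kj].
  rewrite /bit -(subnK (ltnW lt_jk)) expnD mulnAC divnDMl ?expn_gt0 //.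
  by rewrite oddD oddM oddX subn_eq0 leqNgt lt_jk addbF.
have [d ->] : exists d, j = d + k by exists (j - k); rewrite subnK.
rewrite /bit expnD [2 ^ d * _]mulnC divnMA [2 ^ k * _]mulnC divnDMl ?expn_gt0 //.
rewrite (divn_small lt_r) add0n -{2}[k]add0n eqn_add2r subnS addnK.
case: d => [|d] /=; first by rewrite expn0 divn1 oddD oddM /=; case: c.
by rewrite expnS divnMA [2 * q]mulnC divnMDl //; case: c; rewrite addn0.
Qed.

Lemma splice_bit i k : i = i %% 2 ^ k + 2 ^ k * (2 * (i %/ 2 ^ k.+1) + bit i k).
Proof.
by rewrite expnSr divnMA /bit [2 * _]mulnC -modn2 -divn_eq mulnC addnC -divn_eq.
Qed.

Lemma bit_mod i k j : j < k -> bit (i %% 2 ^ k) j = bit i j.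
Proof.
by move=> lt_jk; rewrite [in RHS](splice_bit i k) bit_splice ?lt_jk ?ltn_mod ?expn_gt0.
Qed.

Lemma flip_splice i k :
  flip i k = i %% 2 ^ k + 2 ^ k * (2 * (i %/ 2 ^ k.+1) + ~~ bit i k).
Proof.
rewrite /flip; case bik: (bit i k); rewrite {1}(splice_bit i k) bik /=;
  move: (i %% 2 ^ k) (i %/ 2 ^ k.+1) (2 ^ k) => a b c; nia.
Qed.

Lemma bit_flip i k j : bit (flip i k) j = (j == k) (+) bit i j.
Proof.
rewrite flip_splice [in RHS](splice_bit i k) !bit_splice ?ltn_mod ?expn_gt0 //.
case: ltngtP => //= ->; by rewrite addNb.
Qed.

Lemma flipK k : involutive (flip^~ k).
Proof. by move=> i; apply: eq_bits => j; rewrite !bit_flip addbA addbb. Qed.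

Lemma flip_inj k : injective (flip^~ k).
Proof. exact: inv_inj (flipK k). Qed.

Lemma flipC i a b : flip (flip i a) b = flip (flip i b) a.
Proof. by apply: eq_bits => j; rewrite !bit_flip addbCA. Qed.

Lemma flip_pos_inj i a b : flip i a = flip i b -> a = b.
Proof. by move/(congr1 (bit^~ a)); rewrite !bit_flip eqxx; case: eqP => // _; case: bit. Qed.

Lemma flip_lt_pow {i k m} : i < 2 ^ m -> k < m -> flip i k < 2 ^ m.
Proof.
move=> lt_i lt_km; apply: lt_pow_bits => j le_mj.
by rewrite bit_flip (bit_small lt_i le_mj) addbF; apply/eqP; lia.
Qed.

Lemma ins_splice l e y : ins l e y = y %% 2 ^ l + 2 ^ l * (2 * (y %/ 2 ^ l) + e).
Proof. by rewrite /ins expnS; nia. Qed.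

Lemma bit_ins l e y j :
  bit (ins l e y) j = if j < l then bit y j else if j == l then e else bit y j.-1.
Proof.
rewrite ins_splice bit_splice ?ltn_mod ?expn_gt0 //.
case: ltnP => [/bit_mod //|le_lj]; case: eqP => // ne_jl.
by rewrite bit_div; congr bit; lia.
Qed.

Lemma bit_ins_eq l e y : bit (ins l e y) l = e.
Proof. by rewrite bit_ins ltnn eqxx. Qed.

Lemma ins_inj l e : injective (ins l e).
Proof.
move=> y1 y2 eq_y; apply: eq_bits => j.
have := congr1 (bit^~ (bump l j)) eq_y; rewrite !bit_ins /bump.
case: (ltnP j l) => [lt_jl | le_lj]; first by rewrite add0n lt_jl.
by rewrite add1n ltnNge (leqW le_lj) gtn_eqF.
Qed.

Definition par_lt (k i : nat) : bool := odd (\sum_(r < k) bit i r).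

Lemma par_ltE k i : par k i = par_lt k.+1 i.
Proof. by []. Qed.

Lemma par_lt0 i : par_lt 0 i = false.
Proof. by rewrite /par_lt big_ord0. Qed.

Lemma par_ltS k i : par_lt k.+1 i = par_lt k i (+) bit i k.
Proof. by rewrite /par_lt big_ord_recr /= oddD oddb. Qed.

Lemma par_lt_flip i j k : par_lt k (flip i j) = par_lt k i (+) (j < k).
Proof.
elim: k => [|k IHk]; first by rewrite !par_lt0.
rewrite !par_ltS IHk bit_flip ltnS.
by case: (ltngtP k j); case: par_lt; case: bit.
Qed.

Lemma par_lt_ins l e y k :
  par_lt k (ins l e y) = if k <= l then par_lt k y else par_lt k.-1 y (+) e.
Proof.
elim: k => [|k IHk]; first by rewrite !par_lt0.
rewrite par_ltS IHk bit_ins; case: ltngtP => [_|lt_lk|->] //; first by rewrite par_ltS.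
by case: k lt_lk {IHk} => // k _; rewrite par_ltS addbAC.
Qed.

Lemma par_flip0 k i : par k (flip i 0) = ~~ par k i.
Proof. by rewrite !par_ltE par_lt_flip addbT. Qed.

Lemma flip_ins l e y i : flip (ins l e y) (bump l i) = ins l e (flip y i).
Proof.
apply: eq_bits => j; rewrite bit_flip !bit_ins !bit_flip /bump.
case: (ltngtP j l) => [lt_jl|lt_lj|->]; case: (leqP l i) => le_li //=.
- by rewrite !ltn_eqF //; lia.
- by congr (_ (+) _); apply/eqP/eqP; lia.
- by congr (_ (+) _); apply/eqP/eqP; lia.
- by rewrite ltn_eqF.
- by rewrite add0n gtn_eqF.
Qed.

Lemma bump_lt l {k m} : k < m -> bump l k < m.+1.
Proof. by rewrite /bump; case: leqP; lia. Qed.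

Lemma unbump_lt {l k m} : l <= m -> k < m.+1 -> k != l -> unbump l k < m.
Proof. by rewrite /unbump; case: ltnP; lia. Qed.

Lemma flip_ins_unbump {l e y k} :
  k != l -> flip (ins l e y) k = ins l e (flip y (unbump l k)).
Proof. by move=> ne_kl; rewrite -flip_ins unbumpK. Qed.

Lemma ins_lt_pow l e y m : y < 2 ^ m -> l <= m -> ins l e y < 2 ^ m.+1.
Proof.
move=> lt_y le_lm; apply: lt_pow_bits => j lt_mj.
by rewrite bit_ins ltnNge (leq_trans le_lm (ltnW lt_mj)) gtn_eqF ?(bit_small lt_y) //; lia.
Qed.

Lemma par_bump_ins l e y i : par (bump l i) (ins l e y) = par i y (+) (e && (l <= i)).
Proof.
rewrite !par_ltE par_lt_ins /bump; case: (leqP l i) => [le_li|lt_il].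
  by rewrite add1n ltnNge (leqW le_li) andbT.
by rewrite add0n lt_il andbF addbF.
Qed.

Lemma tins_bump (R : numDomainType) l (s : nat -> R) i : tins l s (bump l i) = s i.
Proof.
rewrite /tins /bump; case: (leqP l i) => [le_li|lt_il]; last by rewrite lt_il.
by rewrite add1n ltnNge (leqW le_li) gtn_eqF.
Qed.

Lemma tins_eq (R : numDomainType) l (s : nat -> R) : tins l s l = 0%R.
Proof. by rewrite /tins ltnn eqxx. Qed.

Lemma bit_double a (b : bool) k :
  bit (2 * a + b) k = if k is k'.+1 then bit a k' else b.
Proof.
case: k => [|k]; first by rewrite bit0E oddD oddM; case: b.
by rewrite bitSE addnC mulnC divnDMl // divn_small ?add0n //; case: b.
Qed.

Lemma par_lt_double a (b : bool) k : par_lt k.+1 (2 * a + b) = b (+) par_lt k a.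
Proof.
elim: k => [|k IHk]; first by rewrite par_ltS !par_lt0 bit_double addbF.
by rewrite par_ltS IHk par_ltS bit_double addbA.
Qed.

Lemma uenum_lt M a : a < 2 ^ M -> uenum M.+1 a < 2 ^ M.+1.
Proof.
by move=> lt_a; apply: lt_pow_bits => -[|k] // le_Mk; rewrite bit_double (bit_small lt_a).
Qed.

Lemma par_uenum M a : a < 2 ^ M -> par M (uenum M.+1 a) = false.
Proof.
by move=> lt_a; rewrite par_ltE par_lt_double par_ltE par_ltS (bit_small lt_a) // addbF addbb.
Qed.

Lemma uenumK M : cancel (uenum M.+1) (divn^~ 2).
Proof.
by move=> a; rewrite /uenum addnC mulnC divnDMl // divn_small ?add0n //; case: par.
Qed.

Lemma uenum_inj M : injective (uenum M.+1).
Proof. exact: can_inj (uenumK M). Qed.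

Lemma uenum_onto M u :
  u < 2 ^ M.+1 -> ~~ par M u -> exists a : 'I_(2 ^ M), uenum M.+1 a = u.
Proof.
move=> lt_u even_u; have u_split : u = 2 * (u %/ 2) + odd u.
  by rewrite {1}(divn_eq u 2) modn2 mulnC.
have lt_half : u %/ 2 < 2 ^ M.
  by apply: lt_pow_bits => k le_Mk; rewrite -bitSE (bit_small lt_u).
exists (Ordinal lt_half); rewrite /uenum /= {3}u_split; congr (_ + nat_of_bool _).
move: even_u; rewrite par_ltE {1}u_split par_lt_double par_ltE par_ltS (bit_small lt_half) //.
by rewrite addbF; case: odd; case: par_lt.
Qed.

Local Open Scope ring_scope.

(** * The coefficients c_t *)

Section Coefficients.
Context {R : rcfType}.

Lemma cc_sep {m} {t : nat -> R} {l u x} : t l = 0 -> bit x l != bit u l -> cc m t u x = 0.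
Proof.
rewrite /cc => tl0; case: pickP => [k /eqP -> | _] // flip_l.
suff -> : val k = l by rewrite tl0 sqrtr0 raddf0 mulr0.
by apply/eqP; apply: contraNT flip_l; rewrite bit_flip eq_sym => /negbTE ->.
Qed.

Lemma cc_flip0 m (t : nat -> R) y' y : cc m t (flip y' 0) (flip y 0) = - cc m t y' y.
Proof.
rewrite /cc (@eq_pick _ _ (fun k : 'I_m => y == flip y' k)); last first.
  by move=> k /=; rewrite flipC (inj_eq (@flip_inj 0)).
by case: pickP => [k _|_]; rewrite ?oppr0 // par_flip0 signrN mulNr.
Qed.

Lemma cc_ins m l e (s : nat -> R) y' y : (l <= m.+1)%N ->
  cc m.+2 (tins l s) (ins l e y') (ins l e y) =
  (-1) ^+ (e && ~~ (par_lt l y' (+) par_lt l y)) * cc m.+1 s y' y.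
Proof.
move=> le_l; rewrite /cc.
case: (pickP (fun k : 'I_m.+1 => y == flip y' k)) => [k /eqP y_k | not_adj].
  have lt_bump := bump_lt l (ltn_ord k).
  case: pickP => [k2 /eqP y_k2 | /(_ (Ordinal lt_bump))]; last by rewrite /= flip_ins -y_k eqxx.
  have -> : val k2 = bump l k by apply: (@flip_pos_inj (ins l e y')); rewrite -y_k2 flip_ins y_k.
  rewrite tins_bump par_bump_ins y_k par_lt_flip addKb -leqNgt signr_addb.
  by rewrite mulrA [_ * (-1) ^+ (e && _)]mulrC.
rewrite mulr0; case: pickP => [k2 /eqP y_k2 | //].
have [->|ne_l] := eqVneq (k2 : nat) l; first by rewrite tins_eq sqrtr0 raddf0 mulr0.
move: y_k2 (not_adj (Ordinal (unbump_lt le_l (ltn_ord k2) ne_l))) => /=.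
by rewrite (flip_ins_unbump ne_l) => /ins_inj ->; rewrite eqxx.
Qed.

Lemma cc_ins_out m l e (s : nat -> R) y x : (l <= m.+1)%N ->
  (forall k, (k < m.+1)%N -> x != ins l e (flip y k)) ->
  cc m.+2 (tins l s) (ins l e y) x = 0.
Proof.
move=> le_l not_adj; rewrite /cc; case: pickP => [k /eqP x_k | //].
have [->|ne_l] := eqVneq (k : nat) l; first by rewrite tins_eq sqrtr0 raddf0 mulr0.
by move: (not_adj _ (unbump_lt le_l (ltn_ord k) ne_l)); rewrite x_k flip_ins_unbump ?eqxx.
Qed.

End Coefficients.

Definition rho_entry {R : rcfType} m (t : nat -> R) (u v x : nat) : R[i] :=
  if ~~ par m.-1 x then ((u == x) && (v == x))%:R else cc m t u x * conjc (cc m t v x).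

Lemma rhoE {R : rcfType} m (t : nat -> R) x a b :
  rho m t x a b = rho_entry m t (uenum m a) (uenum m b) x.
Proof. by rewrite mxE. Qed.

Lemma rho_entry_sep {R : rcfType} {m} {t : nat -> R} {l u v x} :
  t l = 0 -> bit u l != bit v l -> rho_entry m t u v x = 0.
Proof.
move=> tl0 sep; rewrite /rho_entry; case: ifP => _.
  by case: eqP => [u_x|]; case: eqP => [v_x|] //; move: sep; rewrite u_x v_x eqxx.
have [x_u|x_u] := eqVneq (bit x l) (bit u l); last by rewrite (cc_sep tl0 x_u) mul0r.
by rewrite (@cc_sep _ _ _ _ v _ tl0) ?x_u // conjc0 mulr0.
Qed.

(** * Parity-preserving embeddings of Q_{m+1} into Q_{m+2} *)

Section EmbeddingMatrix.
Variables (R : rcfType) (m : nat).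

Definition embed_mx (f : nat -> nat) (sg : nat -> bool) : 'M[R[i]]_(2 ^ m, 2 ^ m.+1) :=
  \matrix_(b, a) if uenum m.+2 a == f (uenum m.+1 b) then (-1) ^+ sg (uenum m.+1 b) else 0.

Lemma mul_embed_mx {f sg n} {X : 'M_(2 ^ m.+1, n)} {b : 'I_(2 ^ m)} {j : 'I_n}
    {a : 'I_(2 ^ m.+1)} :
  uenum m.+2 a = f (uenum m.+1 b) ->
  (embed_mx f sg *m X) b j = (-1) ^+ sg (uenum m.+1 b) * X a j.
Proof.
move=> e_a; rewrite mxE (bigD1 a) //= mxE e_a eqxx big1 ?addr0 // => a' ne_a'.
by rewrite mxE -e_a (inj_eq (@uenum_inj _)) val_eqE (negbTE ne_a') mul0r.
Qed.

Lemma mul_adj_embed_mx {f sg n} {X : 'M_(n, 2 ^ m.+1)} {i : 'I_n} {b : 'I_(2 ^ m)}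
    {a : 'I_(2 ^ m.+1)} :
  uenum m.+2 a = f (uenum m.+1 b) ->
  (X *m adjmx (embed_mx f sg)) i b = X i a * (-1) ^+ sg (uenum m.+1 b).
Proof.
move=> e_a; rewrite mxE (bigD1 a) //= !mxE e_a eqxx rmorph_sign big1 ?addr0 // => a' ne_a'.
by rewrite !mxE -e_a (inj_eq (@uenum_inj _)) val_eqE (negbTE ne_a') conjc0 mulr0.
Qed.

Lemma embed_mx_conj {f g sf sg} {M : 'M_(2 ^ m.+1)} {b1 b2 : 'I_(2 ^ m)}
    {a1 a2 : 'I_(2 ^ m.+1)} :
  uenum m.+2 a1 = f (uenum m.+1 b1) -> uenum m.+2 a2 = g (uenum m.+1 b2) ->
  (embed_mx f sf *m M *m adjmx (embed_mx g sg)) b1 b2 =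
  (-1) ^+ sf (uenum m.+1 b1) * M a1 a2 * (-1) ^+ sg (uenum m.+1 b2).
Proof.
by move=> e_a1 e_a2; rewrite -mulmxA (mul_embed_mx e_a1) (mul_adj_embed_mx e_a2) mulrA.
Qed.

End EmbeddingMatrix.

Lemma adjmx_col (R : rcfType) p1 p2 q (A : 'M[R[i]]_(p1, q)) (B : 'M_(p2, q)) :
  adjmx (col_mx A B) = row_mx (adjmx A) (adjmx B).
Proof. by rewrite /adjmx map_col_mx tr_col_mx. Qed.

Section Embedding.
Variables (m : nat) (f : nat -> nat).
Hypothesis f_inj : injective f.
Hypothesis f_lt : forall y, (y < 2 ^ m.+1)%N -> (f y < 2 ^ m.+2)%N.
Hypothesis f_par : forall y, par m.+1 (f y) = par m y.

Definition preim_vertex (x : nat) : option nat :=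
  omap val [pick y : 'I_(2 ^ m.+1) | x == f y].

Variant preim_vertex_spec x : option nat -> Type :=
  | PreimVertex y of (y < 2 ^ m.+1)%N & x = f y : preim_vertex_spec x (Some y)
  | NoPreimVertex of (forall y, (y < 2 ^ m.+1)%N -> x != f y) : preim_vertex_spec x None.

Lemma preim_vertexP x : preim_vertex_spec x (preim_vertex x).
Proof.
rewrite /preim_vertex; case: pickP => [y /eqP -> | not_f] /=; constructor => //.
by move=> y lt_y; apply/negbT/(not_f (Ordinal lt_y)).
Qed.

Lemma img_preim_vertex (A : nmodType) (q : nat -> A) x :
  img q (preim_vertex x) = \sum_(y < 2 ^ m.+1 | x == f y) q y.
Proof.
case: preim_vertexP => [y lt_y -> | not_f] /=.
  by rewrite (big_pred1 (Ordinal lt_y)) // => y'; rewrite /= (inj_eq f_inj) eq_sym.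
by rewrite big_pred0 // => y; apply/negbTE/not_f.
Qed.

Lemma sum_img_preim_vertex (A : nmodType) (q : nat -> A) (P : pred nat) :
  \sum_(x < 2 ^ m.+2 | P x) img q (preim_vertex x) = \sum_(y < 2 ^ m.+1 | P (f y)) q y.
Proof.
under eq_bigr => x _ do rewrite img_preim_vertex.
rewrite (exchange_big_dep xpredT) //= [RHS]big_mkcond; apply: eq_bigr => y _.
have [Pfy | nPfy] := boolP (P (f y)).
  rewrite (big_pred1 (Ordinal (f_lt _ (ltn_ord y)))) // => x /=.
  by rewrite -val_eqE /=; case: eqP => [->|]; rewrite ?Pfy ?andbF.
by rewrite big_pred0 // => x; case: eqP => [->|]; rewrite ?(negbTE nPfy) ?andbF.
Qed.

Lemma Qrel_preim_vertex (A : nzRingType) (star : A -> A) (q : nat -> A) :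
  (forall y y', adj m.+1 y y' -> adj m.+2 (f y) (f y')) ->
  (forall a b, star (a + b) = star a + star b) ->
  Qrel m.+1 star q -> Qrel m.+2 star (fun x => img q (preim_vertex x)).
Proof.
move=> f_adj starD [q_proj q_U q_V q_orth].
have star0 : star 0 = 0 by apply: (addrI (star 0)); rewrite -starD !addr0.
split.
- move=> x _; case: preim_vertexP => [y lt_y _|_] /=; last by rewrite mul0r star0.
  exact: q_proj.
- rewrite (sum_img_preim_vertex _ q (fun x => ~~ par m.+1 x)) -q_U.
  by apply: eq_bigl => y; rewrite f_par.
- rewrite (sum_img_preim_vertex _ q (par m.+1)) -q_V.
  by apply: eq_bigl => y; rewrite f_par.
move=> u v _ _ u_even v_odd not_adj.
case: preim_vertexP => [y lt_y u_y|_] /=; last by rewrite mul0r.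
case: preim_vertexP => [y' lt_y' v_y'|_] /=; last by rewrite mulr0.
apply: q_orth; rewrite // -?f_par -?u_y -?v_y' //.
by apply: contra not_adj; rewrite u_y v_y'; apply: f_adj.
Qed.

Lemma embed_vertex (b : 'I_(2 ^ m)) :
  exists a : 'I_(2 ^ m.+1), uenum m.+2 a = f (uenum m.+1 b).
Proof. by apply: uenum_onto; rewrite ?f_lt ?uenum_lt // f_par par_uenum. Qed.

Section Representation.
Variable R : rcfType.

Lemma embed_mx_unitary sg : embed_mx R m f sg *m adjmx (embed_mx R m f sg) = 1%:M.
Proof.
apply/matrixP => b1 b2; have [a1 e_a1] := embed_vertex b1.
rewrite (mul_embed_mx _ _ e_a1) !mxE e_a1 (inj_eq f_inj) (inj_eq (@uenum_inj _)) val_eqE.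
by case: eqVneq => [<-|_]; rewrite ?conjc0 ?mulr0 // rmorph_sign -signr_addb addbb.
Qed.

Variables (t s : nat -> R) (sg : nat -> bool).
Hypothesis cc_f :
  forall y' y, cc m.+2 t (f y') (f y) = (-1) ^+ (sg y' (+) sg y) * cc m.+1 s y' y.
Hypothesis cc_f_out : forall u x : nat, (u < 2 ^ m.+1)%N ->
  (forall y, (y < 2 ^ m.+1)%N -> x != f y) -> cc m.+2 t (f u) x = 0.

Lemma rho_entry_embed y1 y2 x : (y1 < 2 ^ m.+1)%N ->
  (-1) ^+ sg y1 * rho_entry m.+2 t (f y1) (f y2) x * (-1) ^+ sg y2 =
  img (rho_entry m.+1 s y1 y2) (preim_vertex x).
Proof.
move=> lt_y1; rewrite /rho_entry /=; case: preim_vertexP => [y _ -> | not_f] /=.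
  rewrite f_par; case: (par m y) => /=.
    rewrite !cc_f !signr_addb !rmorphM !rmorph_sign.
    by case: (sg y1); case: (sg y2); case: (sg y); rewrite ?expr0 ?expr1; ring.
  rewrite !(inj_eq f_inj); case: eqP => [->|_]; case: eqP => [->|_] //=;
    by rewrite ?mulr0 ?mul0r // mulr1 -signr_addb addbb.
case: ifP => _; first by rewrite eq_sym (negbTE (not_f _ lt_y1)) mulr0 mul0r.
by rewrite (cc_f_out _ _ lt_y1 not_f) !mul0r mulr0 mul0r.
Qed.

Lemma embed_mx_rho x :
  embed_mx R m f sg *m rho m.+2 t x *m adjmx (embed_mx R m f sg) =
  img (rho m.+1 s) (preim_vertex x).
Proof.
apply/matrixP => b1 b2; have [a1 e_a1] := embed_vertex b1; have [a2 e_a2] := embed_vertex b2.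
rewrite (embed_mx_conj _ _ e_a1 e_a2) (rhoE m.+2) e_a1 e_a2 rho_entry_embed ?uenum_lt //.
by case: preim_vertex => [y|] /=; rewrite ?rhoE ?mxE.
Qed.

End Representation.
End Embedding.

Arguments embed_vertex {m f}.

Section SeparatedEmbeddings.
Variables (R : rcfType) (m l : nat) (f g : nat -> nat) (sf sg : nat -> bool).
Hypothesis f_lt : forall y, (y < 2 ^ m.+1)%N -> (f y < 2 ^ m.+2)%N.
Hypothesis f_par : forall y, par m.+1 (f y) = par m y.
Hypothesis g_lt : forall y, (y < 2 ^ m.+1)%N -> (g y < 2 ^ m.+2)%N.
Hypothesis g_par : forall y, par m.+1 (g y) = par m y.
Hypothesis fg_sep : forall y y', bit (f y) l != bit (g y') l.

Lemma embed_mx_orth : embed_mx R m f sf *m adjmx (embed_mx R m g sg) = 0.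
Proof.
apply/matrixP => b1 b2; have [a1 e_a1] := embed_vertex f_lt f_par b1.
rewrite (mul_embed_mx _ _ e_a1) !mxE e_a1 ifN ?conjc0 ?mulr0 //.
by apply: contra (fg_sep (uenum m.+1 b1) (uenum m.+1 b2)) => /eqP ->.
Qed.

Lemma embed_mx_rho_orth (t : nat -> R) x :
  t l = 0 -> embed_mx R m f sf *m rho m.+2 t x *m adjmx (embed_mx R m g sg) = 0.
Proof.
move=> tl0; apply/matrixP => b1 b2.
have [a1 e_a1] := embed_vertex f_lt f_par b1; have [a2 e_a2] := embed_vertex g_lt g_par b2.
rewrite (embed_mx_conj _ _ e_a1 e_a2) (rhoE m.+2) e_a1 e_a2 (rho_entry_sep tl0) //.
by rewrite mulr0 mul0r mxE.
Qed.

End SeparatedEmbeddings.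

(** * Inserting a digit *)

(* ins_vertex l true y = (y#0)^{(+l)} and ins_vertex l false y = y^{(-l)}, so that preP and
   preM are preim_vertex of these maps. *)
Definition ins_vertex (l : nat) (e : bool) (y : nat) : nat :=
  ins l e (if e then flip y 0 else y).

Section InsertedVertices.
Variables (m l : nat) (e : bool).
Hypothesis le_l : (l <= m.+1)%N.

Lemma ins_vertex_inj : injective (ins_vertex l e).
Proof. by move=> y y' /ins_inj; case: e => // /flip_inj. Qed.

Lemma ins_vertex_lt y : (y < 2 ^ m.+1)%N -> (ins_vertex l e y < 2 ^ m.+2)%N.
Proof. by move=> lt_y; apply: ins_lt_pow => //; case: e => //; apply: flip_lt_pow. Qed.

Lemma par_ins_vertex y : par m.+1 (ins_vertex l e y) = par m y.
Proof.
rewrite !par_ltE par_lt_ins ifN -?ltnNge ?ltnS //=.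
by case: e; rewrite /= ?par_lt_flip /= ?addbT ?negbK ?addbF.
Qed.

Lemma adj_ins_vertex y y' : adj m.+1 y y' -> adj m.+2 (ins_vertex l e y) (ins_vertex l e y').
Proof.
case/existsP => k /eqP ->; apply/existsP.
exists (Ordinal (bump_lt l (ltn_ord k))).
by rewrite /ins_vertex /= flip_ins; case: e; rewrite // flipC.
Qed.

Lemma bit_ins_vertex y : bit (ins_vertex l e y) l = e.
Proof. exact: bit_ins_eq. Qed.

Variable R : rcfType.

Lemma cc_ins_vertex (s : nat -> R) y' y :
  cc m.+2 (tins l s) (ins_vertex l e y') (ins_vertex l e y) =
  (-1) ^+ (e && par_lt l y' (+) e && par_lt l y) * cc m.+1 s y' y.
Proof.
rewrite cc_ins //; case: e => //=; rewrite cc_flip0 !par_lt_flip addbACA addbb addbF.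
by rewrite signrN mulrNN.
Qed.

Lemma cc_ins_vertex_out (s : nat -> R) (u x : nat) : (u < 2 ^ m.+1)%N ->
  (forall y, (y < 2 ^ m.+1)%N -> x != ins_vertex l e y) ->
  cc m.+2 (tins l s) (ins_vertex l e u) x = 0.
Proof.
move=> lt_u not_ins; apply: cc_ins_out => // k lt_k.
have := not_ins _ (flip_lt_pow lt_u lt_k); rewrite /ins_vertex.
by case: e; rewrite // flipC.
Qed.

End InsertedVertices.

Section InsertionMatrices.
Variables (m l : nat).
Hypothesis le_l : (l <= m.+1)%N.

Lemma Qrel_ins_vertex e (A : nzRingType) (star : A -> A) (q : nat -> A) :
  (forall a b, star (a + b) = star a + star b) ->
  Qrel m.+1 star q -> Qrel m.+2 star (fun x => img q (preim_vertex m (ins_vertex l e) x)).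
Proof.
apply: Qrel_preim_vertex;
  [exact: ins_vertex_inj | exact: ins_vertex_lt | exact: par_ins_vertex | exact: adj_ins_vertex].
Qed.

Variable R : rcfType.

(* An inserted digit 1 shifts the parities par_k, k >= l, which changes the sign of c_t;
   the factor (-1)^(par of the digits of y below l) undoes this (see cc_ins). *)
Definition ins_vertex_mx e : 'M[R[i]]_(2 ^ m, 2 ^ m.+1) :=
  embed_mx R m (ins_vertex l e) (fun y => e && par_lt l y).

Lemma ins_vertex_mx_unitary e : ins_vertex_mx e *m adjmx (ins_vertex_mx e) = 1%:M.
Proof.
by apply: embed_mx_unitary; [exact: ins_vertex_inj | exact: ins_vertex_lt | exact: par_ins_vertex].
Qed.

Lemma ins_vertex_mx_orth e e' : e != e' -> ins_vertex_mx e *m adjmx (ins_vertex_mx e') = 0.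
Proof.
move=> ne_e; apply: (@embed_mx_orth _ _ l); [exact: ins_vertex_lt | exact: par_ins_vertex |].
by move=> y y'; rewrite !bit_ins_vertex.
Qed.

Lemma ins_vertex_mx_rho e (s : nat -> R) x :
  ins_vertex_mx e *m rho m.+2 (tins l s) x *m adjmx (ins_vertex_mx e) =
  img (rho m.+1 s) (preim_vertex m (ins_vertex l e) x).
Proof.
apply: embed_mx_rho;
  [exact: ins_vertex_inj | exact: ins_vertex_lt | exact: par_ins_vertex
  | exact: cc_ins_vertex | exact: cc_ins_vertex_out].
Qed.

Lemma ins_vertex_mx_rho_orth e e' (s : nat -> R) x : e != e' ->
  ins_vertex_mx e *m rho m.+2 (tins l s) x *m adjmx (ins_vertex_mx e') = 0.
Proof.
move=> ne_e; apply: (@embed_mx_rho_orth _ _ l);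
  [exact: ins_vertex_lt | exact: par_ins_vertex | exact: ins_vertex_lt | exact: par_ins_vertex
  | by move=> y y'; rewrite !bit_ins_vertex | exact: tins_eq].
Qed.

End InsertionMatrices.

Lemma mulmx1C_eqdim (K : comPzRingType) p q (A : 'M[K]_(p, q)) (B : 'M_(q, p)) :
  p = q -> A *m B = 1%:M -> B *m A = 1%:M.
Proof. by move=> eq_pq; case: q / eq_pq in A B *; apply: mulmx1C. Qed.

Theorem lemma4p11 (n l : nat) (hn : (2 <= n)%N) (hl : (l < n)%N) :
  (* existence of pi^{(+l)}, pi^{(-l)} (universal property): the prescribed images
     satisfy the defining relations of C^*(Q_n) whenever the \tilde p_y satisfy
     those of C^*(Q_{n-1}) *)
  (forall (A : nzRingType) (star : A -> A),
     (forall a b, star (a + b) = star a + star b) ->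
     (forall a b, star (a * b) = star b * star a) ->
     (forall a, star (star a) = a) ->
     forall q : nat -> A, Qrel n.-1 star q ->
       Qrel n star (fun x => img q (preP n l x)) /\
       Qrel n star (fun x => img q (preM n l x)))
  /\
  (* unitary equivalence rho_t ~ (rho_s o pi^{(+l)}) (+) (rho_s o pi^{(-l)}) *)
  (forall R : rcfType, forall s : nat -> R, simplex n.-1 s ->
     exists U : 'M[R[i]]_(2 ^ n.-1.-1 + 2 ^ n.-1.-1, 2 ^ n.-1),
       U *m adjmx U = 1%:M /\ adjmx U *m U = 1%:M /\
       forall x, (x < 2 ^ n)%N ->
         U *m rho n (tins l s) x *m adjmx U =
         block_mx (img (rho n.-1 s) (preP n l x)) 0
                  0 (img (rho n.-1 s) (preM n l x))).
Proof.
case: n hn hl => [|[|m]] // _ le_l.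
split=> [A star starD _ _ q q_rel | R s _].
  by split; apply: Qrel_ins_vertex.
pose U := col_mx (ins_vertex_mx m l R true) (ins_vertex_mx m l R false).
have U_unitary : U *m adjmx U = 1%:M.
  rewrite adjmx_col mul_col_row !ins_vertex_mx_unitary ?ins_vertex_mx_orth //.
  by rewrite -scalar_mx_block.
exists U; split=> //; split.
  by apply: mulmx1C_eqdim U_unitary; rewrite addnn -mul2n -expnS.
move=> x _.
by rewrite adjmx_col mul_col_mx mul_col_row !ins_vertex_mx_rho ?ins_vertex_mx_rho_orth.
Qed.
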